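(* If the communication graph of a system is a tree, then (for any assignment of directions giving adjacent circles opposite directions) there is a single ring.
   Context: A system consists of pairwise disjoint unit circles $C_1,\dots,C_N$ in the plane and a communication range $r>0$; its communication graph $G$ has the circles as vertices, $C_i,C_j$ adjacent iff the distance between their centres is at most $2+r$. For an edge $(i,j)$, the link position $\phi_{ij}$ is the point of $C_i$ closest to $C_j$. A direction assignment gives each circle $C$ a direction $g(C)\in\{1,-1\}$ (counterclockwise/clockwise) with $g(C_i)=-g(C_j)$ for adjacent circles. Rings. Trace a point moving along a circle $C_i$ in direction $g(C_i)$; whenever it reaches a link position $\phi_{ij}$ of its current circle, it passes to $C_j$ at $\phi_{ji}$ and continues along $C_j$ in direction $g(C_j)$ (the motion of a robot that never meets anyone). This motion is periodic and the closed curve traced is a ring; every arc between consecutive link positions of a circle belongs to exactly one ring, so the circles decompose into rings overlapping only at link positions. *)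

From mathcomp Require Import all_boot all_order all_algebra.
From mathcomp Require Import classical_sets reals trigo.
Set Implicit Arguments. Unset Strict Implicit. Unset Printing Implicit Defensive.
Import Order.TTheory GRing.Theory Num.Theory.
Local Open Scope ring_scope.

Section Rings.
Variable R : realType.

Definition plane_pt := (R * R)%type.

Definition dist (p q : plane_pt) : R :=
  Num.sqrt ((p.1 - q.1) ^+ 2 + (p.2 - q.2) ^+ 2).

(* A system: N unit circles C_i with centres c i, communication range r. *)
Variables (N : nat) (c : 'I_N -> plane_pt) (r : R).

Definition disjoint_unit_circles : Prop :=
  forall i j : 'I_N, i != j -> 2 < dist (c i) (c j).

Definition adj : rel 'I_N :=
  fun i j => (i != j) && (dist (c i) (c j) <= 2 + r).

Definition is_tree : Prop :=
  (forall i j : 'I_N, connect adj i j) /\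
  (forall p : seq 'I_N, uniq p -> (2 < size p)%N -> ~~ cycle adj p).

Definition on_circle (i : 'I_N) (x : plane_pt) : Prop := dist x (c i) = 1.

(* Link position phi_ij: the plane_pt of C_i closest to C_j. *)
Definition link_pos (i j : 'I_N) : plane_pt :=
  let d := dist (c i) (c j) in
  ((c i).1 + ((c j).1 - (c i).1) / d, (c i).2 + ((c j).2 - (c i).2) / d).

Definition is_link (i : 'I_N) (y : plane_pt) : Prop :=
  exists j, adj i j /\ y = link_pos i j.

(* Direction assignment g : each g i is 1 (ccw) or -1 (cw), opposite on edges. *)
Variable g : 'I_N -> R.

Definition direction_assignment : Prop :=
  (forall i, g i = 1 \/ g i = -1) /\ (forall i j, adj i j -> g i = - g j).

Definition move (i : 'I_N) (x : plane_pt) (t : R) : plane_pt :=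
  let a := g i * t in
  let u := x.1 - (c i).1 in let v := x.2 - (c i).2 in
  ((c i).1 + cos a * u - sin a * v, (c i).2 + sin a * u + cos a * v).

Definition free_run (i : 'I_N) (x : plane_pt) (t : R) : Prop :=
  forall t', 0 < t' < t -> ~ is_link i (move i x t').

(* Points (circle, position) from which the robot (started at x0 on C_i0)
   departs along its current circle: the start, and every phi_ji reached by
   passing from C_i to C_j at the first link position phi_ij met on C_i. *)
Inductive departs (i0 : 'I_N) (x0 : plane_pt) : 'I_N -> plane_pt -> Prop :=
  | departs_start : departs i0 x0 i0 x0
  | departs_jump (i : 'I_N) (x : plane_pt) (t : R) (j : 'I_N) :
      departs i0 x0 i x -> 0 < t -> free_run i x t -> adj i j ->
      move i x t = link_pos i j -> departs i0 x0 j (link_pos j i).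

Definition ring_of (i0 : 'I_N) (x0 : plane_pt) : set plane_pt :=
  [set y | exists (i : 'I_N) (x : plane_pt) (t : R),
      departs i0 x0 i x /\ 0 <= t /\ free_run i x t /\ y = move i x t].

End Rings.

(* Going once round a circle C_n from a point where the robot departs, it
   meets the link positions phi_nb in angular order; at each one it passes to
   C_b, and if it comes back to C_n at phi_nb it goes on to the next one.  In a
   tree the robot always comes back: by induction on the size of the branch
   behind C_b, it comes back to C_b from every other neighbour of C_b, so it
   goes round C_b and returns through phi_bn.  Hence it departs from every link
   position of every circle, every arc lies on its ring, and the ring is the
   union of all the circles, whatever the starting point. *)

From mathcomp Require Import all_boot all_order all_algebra.
From mathcomp Require Import classical_sets reals trigo.
From mathcomp Require Import ring lra.
Import Order.TTheory GRing.Theory Num.Theory.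

Set Implicit Arguments. Unset Strict Implicit. Unset Printing Implicit Defensive.

Lemma measure_ind (T : finType) d (O : porderType d) (f : T -> O)
    (P : T -> Prop) :
  (forall x, (forall y, (f y < f x)%O -> P y) -> P x) -> forall x, P x.
Proof.
move=> IH x; have [k lt_k] := ubnP #|[set y | (f y < f x)%O]|.
elim: k x lt_k => // k IHk x lt_k; apply: IH => y lt_yx; apply: IHk.
rewrite -ltnS; apply: leq_trans lt_k; rewrite ltnS; apply/proper_card/fintype.properP.
split.
  by apply/fintype.subsetP => z; rewrite !inE => /lt_trans; apply.
by exists y; rewrite !inE ?lt_yx ?ltxx.
Qed.

Section Tree.
Variables (T : finType) (e : rel T).
Hypotheses (e_sym : symmetric e) (e_irr : irreflexive e).
Hypothesis e_acyclic : forall p : seq T, uniq p -> 2 < size p -> ~~ cycle e p.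

Definition avoid (m : T) : rel T := fun a b => [&& e a b, a != m & b != m].

Definition branch (n m : T) : {set T} := [set a | connect (avoid m) n a].

Lemma avoid_sub m : subrel (avoid m) e.
Proof. by move=> a b /andP []. Qed.

Lemma path_avoid m x p : path (avoid m) x p -> m \notin p.
Proof.
elim: p x => [|y p IHp] x //= /andP [/and3P [_ _ ym] /IHp].
by rewrite inE negb_or eq_sym ym.
Qed.

Lemma branch_self n m : n \in branch n m.
Proof. by rewrite inE connect0. Qed.

Lemma notin_branch n m : n != m -> m \notin branch n m.
Proof.
move=> nm; rewrite inE; apply/connectP => -[p /path_avoid m_notin_p m_last].
by have := mem_last n p; rewrite -m_last inE eq_sym (negbTE nm) (negbTE m_notin_p).
Qed.

(* Otherwise n, c0, ..., m would be a cycle. *)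
Lemma sibling_notin_branch n m c0 :
  e n m -> e n c0 -> c0 != m -> m \notin branch c0 n.
Proof.
move=> enm enc0 c0m; rewrite inE; apply/connectP => -[p p_avoid m_last].
case/shortenP: p_avoid m_last => {}p p_avoid p_uniq _ m_last.
case: p => [|a p] in p_avoid p_uniq m_last *; first by rewrite m_last eqxx in c0m.
have c0n : c0 != n by apply: contraTneq enc0 => ->; rewrite e_irr.
have uniq_cyc : uniq [:: n, c0, a & p].
  by rewrite cons_uniq p_uniq andbT inE negb_or eq_sym c0n (path_avoid p_avoid).
have cyc : cycle e [:: n, c0, a & p].
  rewrite (cycle_path n) /= -[last a p]m_last e_sym enm enc0 /=.
  exact: sub_path (@avoid_sub n) _ _ p_avoid.
by have := e_acyclic uniq_cyc isT; rewrite cyc.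
Qed.

Lemma branch_subset n m c0 :
  e n m -> e n c0 -> c0 != m -> branch c0 n \subset branch n m.
Proof.
move=> enm enc0 c0m; apply/fintype.subsetP => a; rewrite !inE => /connectP [p p_avoid ->].
have nm : n != m by apply: contraTneq enm => ->; rewrite e_irr.
have avoid_nc0 : avoid m n c0 by rewrite /avoid enc0 nm c0m.
apply: connect_trans (connect1 avoid_nc0) _; apply/connectP; exists p => //.
have p_in : all [in branch c0 n] (c0 :: p).
  by apply/allP => y /(path_connect p_avoid) c0y; rewrite inE.
apply: (sub_in_path (P := [in branch c0 n])) p_in p_avoid.
have notin_m x : x \in branch c0 n -> x != m.
  by apply: contraTneq => ->; apply: sibling_notin_branch.
by move=> x y /notin_m xm /notin_m ym /and3P [exy _ _]; rewrite /avoid exy xm ym.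
Qed.

Lemma card_branch_lt n m c0 :
  e n m -> e n c0 -> c0 != m -> #|branch c0 n| < #|branch n m|.
Proof.
move=> enm enc0 c0m; apply/proper_card/fintype.properP; split; first exact: branch_subset.
exists n; first exact: branch_self.
by apply: notin_branch; apply: contraTneq enc0 => ->; rewrite e_irr.
Qed.

Section Traversal.
Variables (enters : T -> T -> Prop) (visits : T -> Prop).
Hypothesis enters_visits : forall a b, enters a b -> visits a.
Hypothesis visits_around : forall n, visits n ->
  (forall b, e n b -> enters b n -> enters n b) -> forall b, e n b -> enters b n.

Lemma enters_return n m : e n m -> enters n m -> enters m n.
Proof.
have [k branch_lt] := ubnP #|branch n m|.
elim: k n m branch_lt => // k IHk n m branch_lt enm ent_nm.
have returns b : e n b -> enters b n -> enters n b.
  move=> enb ent_bn; have [-> // | bm] := eqVneq b m.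
  apply: IHk ent_bn; last by rewrite e_sym.
  by rewrite -ltnS; apply: leq_trans branch_lt; rewrite ltnS card_branch_lt.
exact: (visits_around (enters_visits ent_nm) returns enm).
Qed.

Lemma visits_neighbour n b : visits n -> e n b -> enters b n.
Proof.
move=> vis_n; move: b; apply: (visits_around vis_n) => b enb /enters_return.
by apply; rewrite e_sym.
Qed.

Lemma visits_connect a b : visits a -> connect e a b -> visits b.
Proof.
move=> vis_a /connectP [p]; elim: p a vis_a => [|x p IHp] a vis_a /=.
  by move=> _ ->.
by case/andP=> eax /IHp; apply; apply: enters_visits (visits_neighbour vis_a eax).
Qed.

Lemma enters_all i0 a b :
  visits i0 -> (forall x, connect e i0 x) -> e a b -> enters a b.
Proof.
move=> vis_i0 e_conn eab; apply: visits_neighbour (visits_connect vis_i0 (e_conn b)) _.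
by rewrite e_sym.
Qed.

End Traversal.

End Tree.

Local Open Scope ring_scope.
Local Open Scope classical_set_scope.

Section Angles.
Variable R : realType.

Lemma cos_eq1_small (a : R) : cos a = 1 -> - (pi *+ 2) < a < pi *+ 2 -> a = 0.
Proof.
have pi_gt0 := @pi_gt0 R.
wlog a_ge0 : a / 0 <= a.
  move=> W ca a_small; have [a_ge0 | a_lt0] := leP 0 a; first exact: W.
  have : - a = 0 by apply: W; [lra | rewrite cosN | lra].
  by move/eqP; rewrite oppr_eq0 => /eqP.
move=> ca a_small; have [a_lepi | pi_lta] := leP a pi.
  by apply: cos_inj; rewrite ?in_itv /= ?a_ge0 ?a_lepi ?lexx ?pi_ge0 // ca cos0.
have : pi *+ 2 - a = 0.
  apply: cos_inj; rewrite ?in_itv /= ?lexx ?pi_ge0 //; first lra.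
  by rewrite cosB cos2pi sin2pi ca cos0; lra.
lra.
Qed.

Lemma unit_vector_angle (u v : R) : u ^+ 2 + v ^+ 2 = 1 ->
  exists a, 0 <= a < pi *+ 2 /\ cos a = u /\ sin a = v.
Proof.
move=> uv1; have pi_gt0 := @pi_gt0 R.
have u_bound : -1 <= u <= 1.
  have : u ^+ 2 <= 1 by rewrite -uv1 lerDl sqr_ge0.
  by move=> u2; apply/andP; split; nra.
have sin_acos_u : sin (acos u) = `|v|.
  by rewrite sin_acos // -uv1 addrAC subrr add0r sqrtr_sqr.
have [v_ge0 | v_lt0] := leP 0 v.
  exists (acos u); split; [apply/andP; split | split].
  - exact: acos_ge0.
  - by have := acos_lepi u_bound; lra.
  - by apply: acosK; rewrite in_itv.
  - by rewrite sin_acos_u ger0_norm.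
have acos_gt0 : 0 < acos u.
  by apply: acos_gt0; case/andP: u_bound => -> u_le1 /=; nra.
exists (pi *+ 2 - acos u); split; [apply/andP; split | split].
- by have := acos_lepi u_bound; lra.
- lra.
- by rewrite cosB cos2pi sin2pi mul1r mul0r addr0 acosK // in_itv.
- by rewrite sinB cos2pi sin2pi mul1r mul0r sub0r sin_acos_u ltr0_norm ?opprK.
Qed.

End Angles.

Section Motion.
Variables (R : realType) (N : nat) (c : 'I_N -> plane_pt R) (g : 'I_N -> R).
Hypothesis g_sign : forall m, g m = 1 \/ g m = -1.

Lemma on_circleE m (x : plane_pt R) :
  on_circle c m x <-> (x.1 - (c m).1) ^+ 2 + (x.2 - (c m).2) ^+ 2 = 1.
Proof.
rewrite /on_circle /dist; set a := _ + _.
have a_ge0 : 0 <= a by rewrite addr_ge0 ?sqr_ge0.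
by split=> [a1 | ->]; [rewrite -(sqr_sqrtr a_ge0) a1 expr1n | exact: sqrtr1].
Qed.

Lemma link_pos_on_circle i j :
  dist (c i) (c j) != 0 -> on_circle c i (link_pos c i j).
Proof.
rewrite on_circleE /link_pos /=; set d := dist _ _ => d_neq0.
have d2 : d ^+ 2 = ((c j).1 - (c i).1) ^+ 2 + ((c j).2 - (c i).2) ^+ 2.
  by rewrite sqr_sqrtr ?addr_ge0 ?sqr_ge0 //; ring.
rewrite ![(c i).1 + _ - _]addrAC ![(c i).2 + _ - _]addrAC !subrr !add0r.
by rewrite !expr_div_n -mulrDl -d2 divff // expf_neq0.
Qed.

Lemma moveD m x s t : move c g m (move c g m x s) t = move c g m x (s + t).
Proof. by rewrite /move /= [g m * (s + t)]mulrDr cosD sinD; congr pair; ring. Qed.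

Lemma move0 m x : move c g m x 0 = x.
Proof. by case: x => a b; rewrite /move /= mulr0 cos0 sin0; congr pair; ring. Qed.

Lemma move_period m x : move c g m x (pi *+ 2) = x.
Proof.
case: x => a b; rewrite /move /=.
by have [-> | ->] := g_sign m;
  rewrite ?mul1r ?mulN1r ?cosN ?sinN cos2pi sin2pi; congr pair; ring.
Qed.

Lemma move_on_circle m x t : on_circle c m x -> on_circle c m (move c g m x t).
Proof.
rewrite !on_circleE /move /=; set a := g m * t.
set u := x.1 - _; set v := x.2 - _ => uv1.
have -> : ((c m).1 + cos a * u - sin a * v - (c m).1) ^+ 2 +
    ((c m).2 + sin a * u + cos a * v - (c m).2) ^+ 2 =
    (cos a ^+ 2 + sin a ^+ 2) * (u ^+ 2 + v ^+ 2) by ring.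
by rewrite cos2Dsin2 mul1r.
Qed.

Lemma move_fixed m x t : on_circle c m x -> move c g m x t = x ->
  - (pi *+ 2) < t < pi *+ 2 -> t = 0.
Proof.
case: x => x1 x2; rewrite on_circleE /move /= => + [+ +] t_small.
set a := g m * t; set u := x1 - _; set v := x2 - _ => uv1 e1 e2.
have rot_u : cos a * u - sin a * v = u by rewrite [in RHS]/u -e1; ring.
have rot_v : sin a * u + cos a * v = v by rewrite [in RHS]/v -e2; ring.
have cos_a : cos a = 1.
  have ip : cos a * (u ^+ 2 + v ^+ 2) =
      u * (cos a * u - sin a * v) + v * (sin a * u + cos a * v) by ring.
  by rewrite uv1 mulr1 rot_u rot_v -!expr2 uv1 in ip.
have : a = 0 by apply: cos_eq1_small; rewrite // /a; have [-> | ->] := g_sign m; lra.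
by rewrite /a; have [-> | ->] := g_sign m; lra.
Qed.

Lemma move_inj m x s t : on_circle c m x -> move c g m x s = move c g m x t ->
  - (pi *+ 2) < s - t < pi *+ 2 -> s = t.
Proof.
move=> x_on e st_small.
suff : s - t = 0 by lra.
apply: (@move_fixed m (move c g m x t)) => //; first exact: move_on_circle.
by rewrite moveD addrC subrK.
Qed.

Lemma move_onto m x y : on_circle c m x -> on_circle c m y ->
  exists t, 0 <= t < pi *+ 2 /\ move c g m x t = y.
Proof.
rewrite !on_circleE => x_on y_on; have pi_gt0 := @pi_gt0 R.
have [al [al_range [cos_al sin_al]]] := unit_vector_angle x_on.
have [be [be_range [cos_be sin_be]]] := unit_vector_angle y_on.
have move_t0 : move c g m x (g m * (be - al)) = y.
  rewrite /move; have -> : g m * (g m * (be - al)) = be - al.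
    by have [-> | ->] := g_sign m; ring.
  case: y y_on cos_be sin_be => y1 y2 /= _ cos_be sin_be.
  rewrite -cos_al -sin_al; congr pair.
    by rewrite -addrA -cosD subrK cos_be; ring.
  by rewrite -addrA -sinD subrK sin_be; ring.
have [t0_ge0 | t0_lt0] := leP 0 (g m * (be - al)).
  exists (g m * (be - al)); split => //.
  by apply/andP; split => //; have [gm | gm] := g_sign m; rewrite gm in t0_ge0 *; lra.
exists (g m * (be - al) + pi *+ 2); split; last by rewrite -moveD move_period.
by apply/andP; split; have [gm | gm] := g_sign m; rewrite gm in t0_lt0 *; lra.
Qed.

(* Times are taken in ]0, 2 pi], so that a start on phi_nb meets phi_nb again
   only after a full turn. *)
Definition hit_time (m : 'I_N) (x y : plane_pt R) : R :=
  xget 0 [set t | 0 < t <= pi *+ 2 /\ move c g m x t = y].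

Lemma hit_timeP m x y : on_circle c m x -> on_circle c m y ->
  0 < hit_time m x y <= pi *+ 2 /\ move c g m x (hit_time m x y) = y.
Proof.
move=> x_on y_on; have pi_gt0 := @pi_gt0 R.
apply: (@xgetPex _ 0 [set t | 0 < t <= pi *+ 2 /\ move c g m x t = y]).
have [t [/andP [t_ge0 t_lt] move_t]] := move_onto x_on y_on.
have [t0 | t_neq0] := eqVneq t 0.
  by exists (pi *+ 2); split; [apply/andP; split; lra | rewrite move_period -move_t t0 move0].
by exists t; split => //; apply/andP; split; [rewrite lt_neqAle eq_sym t_neq0 | lra].
Qed.

Lemma hit_time_move m x t : on_circle c m x -> 0 < t <= pi *+ 2 ->
  hit_time m x (move c g m x t) = t.
Proof.
move=> x_on /andP [t_gt0 t_le].
have [/andP [h_gt0 h_le] move_h] := hit_timeP x_on (move_on_circle t x_on).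
by apply: move_inj move_h _ => //; apply/andP; split; lra.
Qed.

End Motion.

Section Robot.
Variables (R : realType) (N : nat) (c : 'I_N -> plane_pt R) (r : R) (g : 'I_N -> R).
Hypothesis c_disj : disjoint_unit_circles c.
Hypothesis g_sign : forall m, g m = 1 \/ g m = -1.

Lemma adj_sym : symmetric (adj c r).
Proof.
move=> i j; rewrite /adj eq_sym /dist.
by congr (_ && (Num.sqrt _ <= _)); ring.
Qed.

Lemma adj_irr : irreflexive (adj c r).
Proof. by move=> i; rewrite /adj eqxx. Qed.

Lemma link_on_circle i j : adj c r i j -> on_circle c i (link_pos c i j).
Proof.
case/andP=> /c_disj dist_gt2 _; apply: link_pos_on_circle.
by rewrite gt_eqF // (lt_trans _ dist_gt2).
Qed.

Section Run.
Variables (i0 : 'I_N) (x0 : plane_pt R).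
Hypothesis x0_on : on_circle c i0 x0.

Lemma departs_on_circle m z : departs c r g i0 x0 m z -> on_circle c m z.
Proof. by case=> [|i x t j _ _ _ ij _] //; apply: link_on_circle; rewrite adj_sym. Qed.

Lemma free_run_gap n z s t : on_circle c n z -> 0 <= s <= t -> t <= pi *+ 2 ->
  (forall j, adj c r n j -> ~ s < hit_time c g n z (link_pos c n j) < t) ->
  free_run c r g n (move c g n z s) (t - s).
Proof.
move=> z_on /andP [s_ge0 s_le] t_le gap t' /andP [t'_gt0 t'_lt] [j [nj]].
rewrite moveD => link_j; apply: (gap j nj).
by rewrite -link_j hit_time_move //; apply/andP; split; lra.
Qed.

Lemma departs_around n : (exists z, departs c r g i0 x0 n z) ->
  (forall b, adj c r n b -> departs c r g i0 x0 b (link_pos c b n) ->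
     departs c r g i0 x0 n (link_pos c n b)) ->
  forall b, adj c r n b -> departs c r g i0 x0 b (link_pos c b n).
Proof.
move=> [z dep_z] returns; have z_on := departs_on_circle dep_z.
pose T b := hit_time c g n z (link_pos c n b).
have T_spec b : adj c r n b ->
    0 < T b <= pi *+ 2 /\ move c g n z (T b) = link_pos c n b.
  by move=> nb; apply: hit_timeP => //; apply: link_on_circle.
move=> b; elim/(measure_ind (f := T)): b => b IH nb.
have [/andP [Tb_gt0 Tb_le] move_Tb] := T_spec b nb.
have [s [s_ge0 s_lt dep_s gap]] : exists s, [/\ 0 <= s, s < T b,
    departs c r g i0 x0 n (move c g n z s) &
    forall j, adj c r n j -> ~ s < T j < T b].
  case: (pickP [pred j | adj c r n j && (T j < T b)]) => [j0 j0P | none].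
    have [b1 /andP [nb1 lt_b1] b1_max] := arg_maxP T j0P.
    have [/andP [Tb1_gt0 _] move_Tb1] := T_spec b1 nb1.
    exists (T b1); split => //; first exact: ltW.
      by rewrite move_Tb1; apply: returns nb1 (IH b1 lt_b1 nb1).
    move=> j nj /andP [lt_j lt_jb]; have := b1_max j; rewrite /= nj lt_jb.
    by move=> /(_ isT); rewrite leNgt lt_j.
  exists 0; split; rewrite ?move0 //.
  by move=> j nj /andP [_ lt_jb]; have := none j; rewrite /= nj lt_jb.
apply: (departs_jump (t := T b - s)) dep_s _ _ nb _.
- by rewrite subr_gt0.
- by apply: free_run_gap => //; rewrite s_ge0 ltW.
- by rewrite moveD addrC subrK.
Qed.

Hypothesis c_tree : is_tree c r.

Let enters_visits a b : departs c r g i0 x0 a (link_pos c a b) ->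
  exists z, departs c r g i0 x0 a z.
Proof. by exists (link_pos c a b). Qed.

Let visits_start : exists z, departs c r g i0 x0 i0 z.
Proof. by exists x0; apply: departs_start. Qed.

Lemma departs_every_circle m : exists z, departs c r g i0 x0 m z.
Proof.
exact: (visits_connect adj_sym adj_irr c_tree.2 enters_visits departs_around
  visits_start (c_tree.1 i0 m)).
Qed.

Lemma departs_every_link a b : adj c r a b ->
  departs c r g i0 x0 a (link_pos c a b).
Proof.
exact: (enters_all adj_sym adj_irr c_tree.2 enters_visits departs_around
  visits_start (c_tree.1 i0)).
Qed.

Lemma ring_sub_circles : ring_of c r g i0 x0 `<=` [set y | exists m, on_circle c m y].
Proof.
move=> _ [m [z [t [dep_z [_ [_ ->]]]]]]; exists m.
by apply: move_on_circle; apply: departs_on_circle dep_z.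
Qed.

Lemma circles_sub_ring : [set y | exists m, on_circle c m y] `<=` ring_of c r g i0 x0.
Proof.
move=> y [m y_on]; have pi_gt0 := @pi_gt0 R.
case: (pickP (adj c r m)) => [k0 mk0 | isolated].
  pose T j := hit_time c g m y (link_pos c m j).
  have [k mk k_max] := arg_maxP T mk0.
  have [/andP [Tk_gt0 Tk_le] move_Tk] := hit_timeP g_sign y_on (link_on_circle mk).
  exists m, (link_pos c m k), (pi *+ 2 - T k); split; first exact: departs_every_link.
  split; first by rewrite subr_ge0.
  split; last by rewrite -move_Tk moveD addrC subrK move_period.
  rewrite -move_Tk; apply: free_run_gap; rewrite ?lexx ?(ltW Tk_gt0) ?Tk_le //.
  by move=> j mj /andP [lt_kj _]; have := k_max j mj; rewrite /= leNgt lt_kj.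
have [z dep_z] := departs_every_circle m.
have [t [/andP [t_ge0 _] move_t]] := move_onto g_sign (departs_on_circle dep_z) y_on.
exists m, z, t; do 3!split => //.
by move=> t' _ [j [mj _]]; have := isolated j; rewrite mj.
Qed.

Lemma ring_of_tree : ring_of c r g i0 x0 = [set y | exists m, on_circle c m y].
Proof. by apply/seteqP; split; [apply: ring_sub_circles | apply: circles_sub_ring]. Qed.

End Run.
End Robot.

Theorem lemma12 (R : realType) (N : nat) (c : 'I_N -> plane_pt R) (r : R)
    (g : 'I_N -> R) :
  0 < r ->
  disjoint_unit_circles c ->
  direction_assignment c r g ->
  is_tree c r ->
  forall (i : 'I_N) (x : plane_pt R) (j : 'I_N) (y : plane_pt R),
    on_circle c i x -> on_circle c j y ->
    ring_of c r g i x = ring_of c r g j y.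
Proof.
move=> _ c_disj [g_sign _] c_tree i x j y x_on y_on.
by rewrite (ring_of_tree c_disj g_sign x_on c_tree) (ring_of_tree c_disj g_sign y_on c_tree).
Qed.
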